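(* For all positive integers $a,b$, the Aztec rectangle $\mathcal{AR}_{a,b}$ (with no defects) has no 180-cover.
   Context: A cell is a unit square $[i,i+1]\times[j,j+1]$ with $i,j\in\mathbb{Z}$, labelled $(i,j)$. The right-oriented trominoes are the translates of $\{(0,0),(1,0),(1,1)\}$ and of $\{(0,0),(0,1),(1,1)\}$; the left-oriented trominoes are the translates of $\{(0,1),(1,0),(1,1)\}$ and of $\{(0,0),(0,1),(1,0)\}$. A 180-cover of a region $R$ is a partition of $R$ into trominoes which are either all right-oriented or all left-oriented. For positive integers $a,b$, the Aztec rectangle $\mathcal{AR}_{a,b}$ is (up to translation) the region consisting of the cells $(i,j)\in\mathbb{Z}^2$ with $0\le i+j\le 2b$ and $1\le j-i\le 2a+1$. *)

From Stdlib Require Import ZArith List.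
Import ListNotations.
Open Scope Z_scope.

(* A cell (i,j) is the unit square [i,i+1]x[j,j+1]. A region is a set of cells. *)
Definition cell := (Z * Z)%type.
Definition region := cell -> Prop.

Inductive shape := RA | RB | LA | LB.

Definition shape_cells (s : shape) : list cell :=
  match s with
  | RA => [(0,0); (1,0); (1,1)]
  | RB => [(0,0); (0,1); (1,1)]
  | LA => [(0,1); (1,0); (1,1)]
  | LB => [(0,0); (0,1); (1,0)]
  end.

Definition right_oriented (s : shape) : Prop := s = RA \/ s = RB.
Definition left_oriented (s : shape) : Prop := s = LA \/ s = LB.

(* A tromino: a shape translated by (tx, ty). Distinct records give distinct
   cell sets, so records represent trominoes faithfully. *)
Record tromino := Tromino { tshape : shape; tx : Z; ty : Z }.

Definition in_tromino (t : tromino) (c : cell) : Prop :=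
  exists p, In p (shape_cells (tshape t)) /\
            c = (tx t + fst p, ty t + snd p).

Definition tromino_partition (R : region) (P : tromino -> Prop) : Prop :=
  (forall t c, P t -> in_tromino t c -> R c) /\
  (forall c, R c -> exists t, P t /\ in_tromino t c) /\
  (forall t1 t2 c, P t1 -> P t2 -> in_tromino t1 c -> in_tromino t2 c -> t1 = t2).

Definition cover180 (R : region) (P : tromino -> Prop) : Prop :=
  tromino_partition R P /\
  ((forall t, P t -> right_oriented (tshape t)) \/
   (forall t, P t -> left_oriented (tshape t))).

Definition aztec_rectangle (a b : Z) : region :=
  fun c => 0 <= fst c + snd c <= 2 * b /\ 1 <= snd c - fst c <= 2 * a + 1.

(* Both right-oriented trominoes contain the SW and NE cells of their 2x2 box, so a
   cell on the lower-left edge of the Aztec rectangle (minimal [i + j]) must be the SW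
   cell of its tromino.  Walking up that edge, this forces, one after the other, the
   trominoes {(-k-1, k+1), (-k, k+1), (-k, k+2)} for k = 0, 1, ..., a; the last one
   sticks out of the rectangle.  The reflection (i, j) |-> (-1 - i, j) exchanges left
   and right orientations and maps AR_{a,b} onto AR_{b,a}, so left-oriented covers are
   excluded as well. *)

From Stdlib Require Import ZArith List Lia.
Open Scope Z_scope.

Lemma in_tromino_iff s x y i j :
  in_tromino (Tromino s x y) (i, j) <-> In (i - x, j - y) (shape_cells s).
Proof.
  split.
  - intros [[p1 p2] [Hp E]]; injection E as -> ->.
    now replace (x + p1 - x, y + p2 - y) with (p1, p2) by (f_equal; lia).
  - intros Hp; exists (i - x, j - y); split; [exact Hp | f_equal; cbn; lia].
Qed.

Ltac solve_in_tromino :=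
  apply in_tromino_iff; cbn [shape_cells In];
  repeat first [left; apply pair_equal_spec; lia | right].

Section Partition.

Variables (R : region) (P : tromino -> Prop).
Hypothesis Hpart : tromino_partition R P.

Lemma partition_sub t c : P t -> in_tromino t c -> R c.
Proof. destruct Hpart as [Hsub _]; apply Hsub. Qed.

Lemma partition_disjoint t1 t2 c :
  P t1 -> P t2 -> in_tromino t1 c -> in_tromino t2 c -> t1 = t2.
Proof. destruct Hpart as [_ [_ Hdisj]]; apply Hdisj. Qed.

Lemma right_partition_cover i j :
  (forall t, P t -> right_oriented (tshape t)) -> R (i, j) ->
  P (Tromino RA i j) \/ P (Tromino RA (i - 1) j) \/ P (Tromino RA (i - 1) (j - 1)) \/
  P (Tromino RB i j) \/ P (Tromino RB i (j - 1)) \/ P (Tromino RB (i - 1) (j - 1)).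
Proof.
  intros Hright Hc.
  destruct Hpart as [_ [Hcov _]].
  destruct (Hcov _ Hc) as [[s x y] [Ht Hin]].
  apply in_tromino_iff in Hin.
  destruct (Hright _ Ht) as [Hs | Hs]; cbn in Hs; subst s; cbn in Hin;
    destruct Hin as [Hin | [Hin | [Hin | []]]]; apply pair_equal_spec in Hin;
    first [replace x with i in Ht by lia | replace x with (i - 1) in Ht by lia];
    first [replace y with j in Ht by lia | replace y with (j - 1) in Ht by lia];
    tauto.
Qed.

End Partition.

Section RightCoverOfAztecRectangle.

Variables (a b : Z) (P : tromino -> Prop).
Hypotheses (ha : 0 <= a) (hb : 0 < b).
Hypothesis Hpart : tromino_partition (aztec_rectangle a b) P.
Hypothesis Hright : forall t, P t -> right_oriented (tshape t).

Lemma aztec_RA_bounds x y :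
  P (Tromino RA x y) -> 0 <= x + y <= 2 * b - 2 /\ 2 <= y - x <= 2 * a + 1.
Proof.
  intros HP.
  pose proof (partition_sub _ _ Hpart _ (x, y) HP ltac:(solve_in_tromino)).
  pose proof (partition_sub _ _ Hpart _ (x + 1, y) HP ltac:(solve_in_tromino)).
  pose proof (partition_sub _ _ Hpart _ (x + 1, y + 1) HP ltac:(solve_in_tromino)).
  unfold aztec_rectangle in *; cbn [fst snd] in *; lia.
Qed.

Lemma aztec_RB_bounds x y :
  P (Tromino RB x y) -> 0 <= x + y <= 2 * b - 2 /\ 1 <= y - x <= 2 * a.
Proof.
  intros HP.
  pose proof (partition_sub _ _ Hpart _ (x, y) HP ltac:(solve_in_tromino)).
  pose proof (partition_sub _ _ Hpart _ (x, y + 1) HP ltac:(solve_in_tromino)).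
  pose proof (partition_sub _ _ Hpart _ (x + 1, y + 1) HP ltac:(solve_in_tromino)).
  unfold aztec_rectangle in *; cbn [fst snd] in *; lia.
Qed.

Ltac cover_cell i j :=
  let HP := fresh "HP" in
  destruct (right_partition_cover _ _ Hpart i j Hright
              ltac:(unfold aztec_rectangle; cbn [fst snd]; lia))
    as [HP | [HP | [HP | [HP | [HP | HP]]]]];
  first [ pose proof (aztec_RA_bounds _ _ HP) | pose proof (aztec_RB_bounds _ _ HP) ];
  try (exfalso; lia).

Ltac overlap_at H1 H2 i j :=
  exfalso;
  let E := fresh "E" in
  pose proof (partition_disjoint _ _ Hpart _ _ (i, j) H1 H2
                ltac:(solve_in_tromino) ltac:(solve_in_tromino)) as E;
  first [discriminate E | injection E; lia].

Lemma aztec_edge_origin k :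
  1 <= k <= a -> P (Tromino RA (-k) k) \/ P (Tromino RB (-k) k).
Proof. intros Hk; cover_cell (-k) k; tauto. Qed.

Lemma aztec_edge_step k :
  0 <= k <= a -> (0 < k -> P (Tromino RA (-k) k)) -> P (Tromino RA (-k - 1) (k + 1)).
Proof.
  intros Hk Hprev; cover_cell (-k) (k + 1).
  - overlap_at HP (Hprev ltac:(lia)) (-k + 1) (k + 1).
  - exact HP.
  - destruct (aztec_edge_origin (k + 1) ltac:(lia)) as [Hedge | Hedge].
    + now replace (-k - 1) with (- (k + 1)) by lia.
    + overlap_at HP Hedge (-k) (k + 2).
  - overlap_at HP (Hprev ltac:(lia)) (-k) k.
Qed.

Lemma aztec_edge_chain k : 0 <= k -> k <= a -> P (Tromino RA (-k - 1) (k + 1)).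
Proof.
  revert k; apply (natlike_ind (fun k => k <= a -> P (Tromino RA (-k - 1) (k + 1)))).
  - intros _; apply aztec_edge_step; lia.
  - intros n Hn IH Hna; apply aztec_edge_step; [lia |].
    intros _; unfold Z.succ; replace (- (n + 1)) with (-n - 1) by lia; apply IH; lia.
Qed.

Lemma no_right_cover_aztec_rectangle : False.
Proof. pose proof (aztec_RA_bounds _ _ (aztec_edge_chain a ha (Z.le_refl a))); lia. Qed.

End RightCoverOfAztecRectangle.

Definition mirror_shape (s : shape) : shape :=
  match s with RA => LB | RB => LA | LA => RB | LB => RA end.

Definition mirror (t : tromino) : tromino :=
  Tromino (mirror_shape (tshape t)) (-2 - tx t) (ty t).

Definition mirror_cell (c : cell) : cell := (-1 - fst c, snd c).

Lemma mirror_involutive t : mirror (mirror t) = t.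
Proof.
  destruct t as [[] x y]; unfold mirror; cbn [mirror_shape tshape tx ty]; f_equal; lia.
Qed.

Lemma In_shape_cells_mirror s d e :
  In (1 - d, e) (shape_cells (mirror_shape s)) <-> In (d, e) (shape_cells s).
Proof.
  destruct s; cbn [mirror_shape shape_cells In]; split; intros H;
    destruct H as [H | [H | [H | []]]]; apply pair_equal_spec in H;
    repeat first [left; apply pair_equal_spec; lia | right].
Qed.

Lemma in_tromino_mirror t c : in_tromino (mirror t) (mirror_cell c) <-> in_tromino t c.
Proof.
  destruct t as [s x y], c as [i j].
  unfold mirror, mirror_cell; cbn [tshape tx ty fst snd].
  rewrite !in_tromino_iff, <- (In_shape_cells_mirror s).
  now replace (-1 - i - (-2 - x)) with (1 - (i - x)) by lia.
Qed.

Lemma tromino_partition_mirror R R' P :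
  (forall c, R' c <-> R (mirror_cell c)) ->
  tromino_partition R P -> tromino_partition R' (fun t => P (mirror t)).
Proof.
  intros HR [Hsub [Hcov Hdisj]]; split; [| split].
  - intros t c Ht Hc; apply HR, (Hsub _ _ Ht), in_tromino_mirror, Hc.
  - intros c Hc.
    destruct (Hcov _ (proj1 (HR c) Hc)) as [t [Ht Htc]].
    exists (mirror t); rewrite mirror_involutive; split; [exact Ht |].
    apply in_tromino_mirror; now rewrite mirror_involutive.
  - intros t1 t2 c Ht1 Ht2 Hc1 Hc2.
    rewrite <- (mirror_involutive t1), <- (mirror_involutive t2); f_equal.
    apply (Hdisj _ _ (mirror_cell c) Ht1 Ht2); now apply in_tromino_mirror.
Qed.

Lemma aztec_rectangle_mirror a b c :
  aztec_rectangle b a c <-> aztec_rectangle a b (mirror_cell c).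
Proof.
  destruct c as [i j]; unfold aztec_rectangle, mirror_cell; cbn [fst snd]; split; lia.
Qed.

Lemma right_of_left_mirror s : left_oriented (mirror_shape s) -> right_oriented s.
Proof. destruct s; cbn; intros [H | H]; discriminate H || (now left) || (now right). Qed.

Theorem theorem5 (a b : Z) (ha : 0 < a) (hb : 0 < b) :
  ~ exists P : tromino -> Prop, cover180 (aztec_rectangle a b) P.
Proof.
  intros [P [Hpart [Hright | Hleft]]].
  - exact (no_right_cover_aztec_rectangle a b P ltac:(lia) hb Hpart Hright).
  - apply (no_right_cover_aztec_rectangle b a (fun t => P (mirror t)) ltac:(lia) ha).
    + exact (tromino_partition_mirror _ _ _ (aztec_rectangle_mirror a b) Hpart).
    + intros t Ht; exact (right_of_left_mirror _ (Hleft _ Ht)).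
Qed.
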